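(* Let $\langle-,-\rangle$ be a cyclic form on $C$. If $v\notin\mathrm{Span}\{v_1,\dots,v_n,w_1,\dots,w_l\}$, then $$\langle\mu(v_1,\dots,v_n,v),\mu(w_1,\dots,w_l)\rangle=\langle\mu(v_1,\dots,v_n),\mu(v,w_1,\dots,w_l)\rangle.$$
   Context: $k$ is a field of characteristic zero, $V$ a $k$-vector space of dimension $m\ge1$ in degree $0$, $A=\mathrm{Sym}(V)$, and $C=A^{\textup{!`}}$ the exterior coalgebra on $sV$ with elements $\mu(v_1,\dots,v_n)=sv_1\wedge\cdots\wedge sv_n$ (the vectors in each such expression taken linearly independent), counit element $e$, and coproduct $\triangle\mu(v_1,\dots,v_n)=\sum_{p=0}^n\sum_{\sigma\in Sh_{p,n-p}}\mathrm{sgn}(\sigma)\mu(v_{\sigma(1)},\dots,v_{\sigma(p)})\otimes\mu(v_{\sigma(p+1)},\dots,v_{\sigma(n)})$. A symmetric bilinear form of degree $-d$ on $C$ is $\langle-,-\rangle:C\otimes C\to k[d]$ with $\langle a,b\rangle=(-1)^{|a||b|}\langle b,a\rangle$; it is cyclic if $\sum\langle a,b^2\rangle b^1=\sum\langle a^1,b\rangle a^2$ for all $a,b$, where $\triangle(a)=\sum a^1\otimes a^2$, $\triangle(b)=\sum b^1\otimes b^2$. *)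

From HB Require Import structures.
From mathcomp Require Import all_boot all_order all_algebra.
Set Implicit Arguments. Unset Strict Implicit. Unset Printing Implicit Defensive.
Import Order.TTheory GRing.Theory Num.Theory.
Local Open Scope ring_scope.

(* Model: V = k^m (row vectors 'rV[k]_m, standard basis e_0..e_{m-1}).
   C = exterior coalgebra on sV, with basis e_S = s e_{s1} /\ ... /\ s e_{sn}
   for S = {s1 < ... < sn} a subset of 'I_m; |e_S| = #|S|.
   An element of C is its coefficient function on this basis. *)
Definition coalg (k : fieldType) (m : nat) := {ffun {set 'I_m} -> k}.

Definition cbasis (k : fieldType) (m : nat) (S : {set 'I_m}) : coalg k m :=
  [ffun T : {set 'I_m} => (T == S)%:R].

Definition homog (k : fieldType) (m p : nat) (a : coalg k m) : Prop :=
  forall S, a S != 0 -> #|S| = p.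

(* mu(v_1,...,v_n) = s v_1 /\ ... /\ s v_n, where v_i is row i of A.
   Its coefficient on e_S (#|S| = n) is the n x n minor of A on the columns
   of S (taken in increasing order): the j-th column is the c in S having
   exactly j elements of S below it. *)
Definition mu (k : fieldType) (m n : nat) (A : 'M[k]_(n, m)) : coalg k m :=
  [ffun S : {set 'I_m} => if #|S| == n then
     \det (\matrix_(i < n, j < n)
             \sum_(c in S | #|[set c' in S | (c' < c)%N]| == j) A i c)
   else 0].

Definition shsign (k : fieldType) (m : nat) (P Q : {set 'I_m}) : k :=
  (-1) ^+ #|[set pq in setX P Q | (pq.2 < pq.1)%N]|.

(* Coproduct: coefficient of e_P (x) e_Q in triangle(a).
   triangle(e_S) = sum_{P sqcup Q = S} sgn(P,Q) e_P (x) e_Q. *)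
Definition coprod (k : fieldType) (m : nat) (a : coalg k m) (P Q : {set 'I_m}) : k :=
  if [disjoint P & Q] then shsign k P Q * a (P :|: Q) else 0.

Definition cform (k : fieldType) (m : nat) (B : {set 'I_m} -> {set 'I_m} -> k)
  (a b : coalg k m) : k :=
  \sum_(S : {set 'I_m}) \sum_(T : {set 'I_m}) a S * b T * B S T.

(* Form of degree -d: <a,b> = 0 unless |a| + |b| = d. *)
Definition form_degree (k : fieldType) (m : nat) (B : {set 'I_m} -> {set 'I_m} -> k)
  (d : nat) : Prop :=
  forall (p q : nat) (a b : coalg k m), homog p a -> homog q b ->
    (p + q)%N != d -> cform B a b = 0.

Definition form_symmetric (k : fieldType) (m : nat) (B : {set 'I_m} -> {set 'I_m} -> k) : Prop :=
  forall (p q : nat) (a b : coalg k m), homog p a -> homog q b ->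
    cform B a b = (-1) ^+ (p * q) * cform B b a.

(* Cyclic: sum <a, b^2> b^1 = sum <a^1, b> a^2 as elements of C,
   compared coefficientwise on each basis element e_R. *)
Definition form_cyclic (k : fieldType) (m : nat) (B : {set 'I_m} -> {set 'I_m} -> k) : Prop :=
  forall (a b : coalg k m) (R : {set 'I_m}),
    \sum_(Q : {set 'I_m}) coprod b R Q * cform B a (cbasis k Q)
    = \sum_(P : {set 'I_m}) coprod a P R * cform B (cbasis k P) b.

From HB Require Import structures.
From mathcomp Require Import all_boot all_order all_algebra.
From mathcomp Require Import zify.
Set Implicit Arguments. Unset Strict Implicit. Unset Printing Implicit Defensive.
Import Order.TTheory GRing.Theory Num.Theory.
Local Open Scope ring_scope.

(** Choose a linear functional [f] with [f x = 1] that kills every [v_j] and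
    every [w_j]. Contracting the coproduct of [mu(x, w)] with [f] in its first
    tensor factor gives back [mu(w)], and contracting the coproduct of
    [mu(v, x)] with [f] in its second factor gives back [mu(v)]; both are
    Laplace expansions along the column of the new basis vector. Weighting the
    cyclicity identity at [R = {i}] by [f_i] and summing over [i] therefore
    turns its two sides into the two sides of the claim. *)

Lemma signr_addKl (R : pzRingType) (a b : nat) (x : R) :
  (-1) ^+ a * ((-1) ^+ (b + a) * x) = (-1) ^+ b * x.
Proof. by rewrite mulrA -exprD addnCA addnn -muln2 exprD exprM sqrr_sign mulr1. Qed.

Lemma row'_mulmx (R : pzRingType) a b c (r : 'I_a.+1)
    (A : 'M[R]_(a.+1, b)) (X : 'M[R]_(b, c)) :
  row' r (A *m X) = row' r A *m X.
Proof. by apply/matrixP => i j; rewrite !mxE; apply: eq_bigr => l _; rewrite !mxE. Qed.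

Lemma col'_mulmx (R : pzRingType) a b c (j : 'I_c.+1)
    (A : 'M[R]_(a, b)) (X : 'M[R]_(b, c.+1)) :
  col' j (A *m X) = A *m col' j X.
Proof. by apply/matrixP => i j'; rewrite !mxE; apply: eq_bigr => l _; rewrite !mxE. Qed.

Lemma sum_mul_delta (R : pzSemiRingType) m (F : 'I_m -> R) (i : 'I_m) :
  \sum_c F c * (c == i)%:R = F i.
Proof.
rewrite (bigD1 i) //= eqxx mulr1 big1 ?addr0 // => c /negbTE ->.
by rewrite mulr0.
Qed.

Section RankInSet.
Variable m : nat.
Implicit Types (S : {set 'I_m}) (c : 'I_m).

Definition rank_in S c : nat := #|[set c' in S | (c' < c)%N]|.

Lemma rank_in_mono S c c' : (c <= c')%N -> (rank_in S c <= rank_in S c')%N.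
Proof.
move=> le_cc'; apply: subset_leq_card; apply/subsetP => y; rewrite !inE.
by case/andP=> -> /= lt_yc; exact: leq_trans lt_yc le_cc'.
Qed.

Lemma rank_in_ltn S c c' :
  c \in S -> (c < c')%N -> (rank_in S c < rank_in S c')%N.
Proof.
move=> cS lt_cc'; apply: proper_card; apply/properP; split.
  apply/subsetP => y; rewrite !inE; case/andP=> -> /= lt_yc.
  exact: ltn_trans lt_yc lt_cc'.
by exists c; rewrite !inE ?cS ?lt_cc' // ltnn andbF.
Qed.

Lemma rank_in_inj S c c' :
  c \in S -> c' \in S -> rank_in S c = rank_in S c' -> c = c'.
Proof.
move=> cS c'S eq_rk; apply/val_inj; case: (ltngtP c c') => // lt.
  by have := rank_in_ltn cS lt; rewrite eq_rk ltnn.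
by have := rank_in_ltn c'S lt; rewrite eq_rk ltnn.
Qed.

Lemma rank_in_leq_card S c : (rank_in S c <= #|S|)%N.
Proof. by apply: subset_leq_card; apply/subsetP => y; rewrite inE => /andP[]. Qed.

Lemma rank_in_ltn_card S c : c \in S -> (rank_in S c < #|S|)%N.
Proof.
move=> cS; apply: proper_card; apply/properP; split.
  by apply/subsetP => y; rewrite inE => /andP[].
by exists c; rewrite // inE ltnn andbF.
Qed.

Lemma rank_in_setU1 S i c : i \notin S ->
  rank_in ([set i] :|: S) c = ((i < c)%N + rank_in S c)%N.
Proof.
move=> iS; rewrite /rank_in.
have -> : [set c' in [set i] :|: S | (c' < c)%N] =
    if (i < c)%N then i |: [set c' in S | (c' < c)%N]
    else [set c' in S | (c' < c)%N].
  apply/setP => y; case: ifP => lt_ic; rewrite !inE;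
    by case: (eqVneq y i) => [->|] //=; rewrite ?lt_ic ?andbF.
by case: ifP => // _; rewrite cardsU1 inE (negbTE iS).
Qed.

End RankInSet.

Section ColumnSelection.
Variables (k : fieldType) (m : nat).
Implicit Types (S Q : {set 'I_m}) (c i : 'I_m).

(* [A *m colsel S p] lists the columns of [A] indexed by [S] in increasing order. *)
Definition colsel S p : 'M[k]_(m, p) :=
  \matrix_(c, j) ((c \in S) && (rank_in S c == j))%:R.

Lemma muE n (A : 'M[k]_(n, m)) S :
  mu A S = if #|S| == n then \det (A *m colsel S n) else 0.
Proof.
rewrite ffunE; case: ifP => // _; congr (\det _); apply/matrixP => i j.
rewrite !mxE big_mkcond /=; apply: eq_bigr => c _; rewrite !mxE /rank_in.
by case: ifP; rewrite ?mulr1 ?mulr0.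
Qed.

Lemma mu_castmx p q (e : p = q) (A : 'M[k]_(p, m)) :
  mu (castmx (e, erefl m) A) = mu A.
Proof. by case: q / e; rewrite castmx_id. Qed.

Lemma colsel_col p (j : 'I_p) S c :
  c \in S -> nat_of_ord j = rank_in S c -> forall c', colsel S p c' j = (c' == c)%:R.
Proof.
move=> cS rk_c c'; rewrite !mxE; case: (eqVneq c' c) => [->|ne].
  by rewrite cS rk_c eqxx.
case c'S: (c' \in S) => //=; case: eqP => // rk_c'; case/eqP: ne.
by apply: (rank_in_inj c'S cS); rewrite rk_c'.
Qed.

Section AddOneColumn.
Variables (Q : {set 'I_m}) (i : 'I_m) (p : nat) (j0 : 'I_p.+1).
Hypotheses (iQ : i \notin Q) (rk_i : nat_of_ord j0 = rank_in Q i).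

Lemma colsel_setU1_col : forall c, colsel ([set i] :|: Q) p.+1 c j0 = (c == i)%:R.
Proof.
apply: colsel_col; first by rewrite !inE eqxx.
by rewrite rank_in_setU1 // ltnn.
Qed.

Lemma colsel_setU1_col' : col' j0 (colsel ([set i] :|: Q) p.+1) = colsel Q p.
Proof.
apply/matrixP => c j; rewrite !mxE rank_in_setU1 // !inE.
case: (eqVneq c i) => [->|ne_ci] /=.
  by rewrite (negbTE iQ) ltnn add0n -rk_i (negbTE (neq_bump _ _)).
case cQ: (c \in Q) => //=; congr (_%:R).
case: (ltngtP i c) => [lt_ic|lt_ci|eq_ic]; last by case/eqP: ne_ci; apply/val_inj.
- have := rank_in_mono Q (ltnW lt_ic); rewrite -rk_i => le_j0.
  by rewrite /bump; case: leqP => /= ?; apply/eqP/eqP; lia.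
- have := rank_in_ltn cQ lt_ci; rewrite -rk_i => lt_j0.
  by rewrite /bump; case: leqP => /= ?; apply/eqP/eqP; lia.
Qed.

End AddOneColumn.
End ColumnSelection.

Section LaplaceContraction.
Variables (k : fieldType) (m p : nat) (A : 'M[k]_(p.+1, m)) (Q : {set 'I_m}).
Hypothesis card_Q : #|Q| = p.

(* Laplace expansion along a column [c] of [A] placed in front of the minor on [Q]. *)
Definition expand_col (c : 'I_m) : k :=
  \sum_r A r c * ((-1) ^+ r * \det (row' r A *m colsel k Q p)).

Lemma expand_col_setU1 i : i \notin Q ->
  expand_col i = (-1) ^+ rank_in Q i * \det (A *m colsel k ([set i] :|: Q) p.+1).
Proof.
move=> iQ; have rk_lt : (rank_in Q i < p.+1)%N by rewrite ltnS -card_Q rank_in_leq_card.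
pose j0 : 'I_p.+1 := Ordinal rk_lt.
rewrite (expand_det_col _ j0) mulr_sumr; apply: eq_bigr => r _.
rewrite /cofactor col'_mulmx colsel_setU1_col' // row'_mulmx.
have -> : (A *m colsel k ([set i] :|: Q) p.+1) r j0 = A r i.
  by rewrite mxE -[RHS](sum_mul_delta (A r)); apply: eq_bigr => c _;
    rewrite colsel_setU1_col.
by rewrite [RHS]mulrCA /j0 /= signr_addKl mulrCA.
Qed.

(* For [c] in [Q] the expansion is the determinant of a matrix with two equal columns. *)
Lemma expand_col_mem c : c \in Q -> expand_col c = 0.
Proof.
move=> cQ; pose N : 'M[k]_p.+1 := \matrix_(r, j) match unlift ord0 j with
   | Some j' => (A *m colsel k Q p) r j' | None => A r c end.
have rk_lt : (rank_in Q c < p)%N by rewrite -card_Q rank_in_ltn_card.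
have det_N : \det N = 0.
  rewrite -det_tr; apply: (@determinant_alternate _ _ _ ord0 (lift ord0 (Ordinal rk_lt))).
    exact: neq_lift.
  move=> r; rewrite !mxE unlift_none liftK mxE.
  rewrite -[LHS](sum_mul_delta (A r) c); apply: eq_bigr => c' _.
  by rewrite (colsel_col _ cQ).
rewrite -det_N (expand_det_col N ord0); apply: eq_bigr => r _.
rewrite /cofactor addn0 mxE unlift_none; congr (_ * (_ * \det _)).
by apply/matrixP => i j; rewrite !mxE liftK mxE; apply: eq_bigr => l _; rewrite !mxE.
Qed.

Lemma contract_det_colsel (f : 'cV[k]_m) :
  \sum_i f i 0 * (if i \notin Q then
       (-1) ^+ rank_in Q i * \det (A *m colsel k ([set i] :|: Q) p.+1) else 0)
  = \sum_r (A *m f) r 0 * ((-1) ^+ r * \det (row' r A *m colsel k Q p)).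
Proof.
transitivity (\sum_i f i 0 * expand_col i).
  apply: eq_bigr => i _; case: ifPn => [iQ|/negPn iQ].
    by rewrite expand_col_setU1.
  by rewrite expand_col_mem ?mulr0.
rewrite /expand_col; under eq_bigr do rewrite mulr_sumr.
rewrite exchange_big /=; apply: eq_bigr => r _.
rewrite mxE mulr_suml; apply: eq_bigr => i _.
by rewrite mulrA (mulrC (f i 0)).
Qed.

Lemma contract_det_colsel_delta (f : 'cV[k]_m) (r0 : 'I_p.+1) :
    (forall r, (A *m f) r 0 = (r == r0)%:R) ->
  \sum_i f i 0 * (if i \notin Q then
       (-1) ^+ rank_in Q i * \det (A *m colsel k ([set i] :|: Q) p.+1) else 0)
  = (-1) ^+ r0 * \det (row' r0 A *m colsel k Q p).
Proof.
move=> Af; rewrite contract_det_colsel (bigD1 r0) //= Af eqxx mul1r.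
by rewrite big1 ?addr0 // => r /negbTE ne_r; rewrite Af ne_r mul0r.
Qed.

End LaplaceContraction.

Section ShuffleSign.
Variables (k : fieldType) (m : nat).
Implicit Types (P Q : {set 'I_m}) (i : 'I_m).

Lemma shsign_set1l Q i : shsign k [set i] Q = (-1) ^+ rank_in Q i.
Proof.
rewrite /shsign /rank_in; congr (_ ^+ _).
have pair_inj : injective (fun b : 'I_m => (i, b)) by move=> a b [].
rewrite -(card_imset _ pair_inj).
apply: eq_card => -[a b]; rewrite [in LHS]inE /=.
apply/andP/imsetP => [[/setXP[/set1P -> bQ] lt_bi]|[b' ]].
  by exists b => //; rewrite inE bQ lt_bi.
by rewrite inE => /andP[b'Q lt_b'i] [-> ->]; rewrite !inE eqxx b'Q lt_b'i.
Qed.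

(* The pairs counted are the elements of [P] above [i]; those below [i] are
   counted by [rank_in P i], and together they make up [P]. *)
Lemma shsign_set1r P i : i \notin P ->
  shsign k P [set i] = (-1) ^+ #|P| * (-1) ^+ rank_in P i.
Proof.
move=> iP.
have -> : shsign k P [set i] = (-1) ^+ #|[set c in P | (i < c)%N]|.
  rewrite /shsign; congr (_ ^+ _).
  have pair_inj : injective (fun a : 'I_m => (a, i)) by move=> a b [].
  rewrite -(card_imset _ pair_inj).
  apply: eq_card => -[a b]; rewrite [in LHS]inE /=.
  apply/andP/imsetP => [[/setXP[aP /set1P ->] lt_ia]|[a' ]].
    by exists a => //; rewrite inE aP lt_ia.
  by rewrite inE => /andP[a'P lt_ia'] [-> ->]; rewrite !inE eqxx a'P lt_ia'.
have -> : #|P| = (#|[set c in P | (i < c)%N]| + rank_in P i)%N.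
  rewrite -(cardsID [set c : 'I_m | (c < i)%N] P) addnC /rank_in; congr (_ + _)%N.
    apply: eq_card => c; rewrite !inE; case cP: (c \in P); rewrite /= ?andbF //.
    rewrite ltnNge leq_eqVlt negb_or; case: (ltngtP c i) => //= eq_ci.
    by move: iP; rewrite -(val_inj eq_ci) cP.
  by apply: eq_card => c; rewrite !inE.
by rewrite -exprD -addnA addnn -muln2 exprD exprM sqrr_sign mulr1.
Qed.

End ShuffleSign.

Section CoproductContraction.
Variables (k : fieldType) (m : nat) (f : 'cV[k]_m).

Lemma coprod_mu_contract_l l (x : 'rV[k]_m) (w : 'M[k]_(l, m)) Q :
  x *m f = 1 -> w *m f = 0 ->
  \sum_i f i 0 * coprod (mu (col_mx x w)) [set i] Q = mu w Q.
Proof.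
move=> xf wf; rewrite [RHS]muE.
have card_setU1 i : i \notin Q -> #|[set i] :|: Q| = (1 + #|Q|)%N.
  by move=> iQ; rewrite cardsU1 iQ.
case: eqP => card_Q; last first.
  rewrite big1 // => i _; rewrite /coprod disjoints1; case: ifP => iQ; last by rewrite mulr0.
  by rewrite muE card_setU1 // eqn_add2l; move/eqP/negbTE: card_Q => ->; rewrite !mulr0.
have lift0E (j : 'I_l) : lift (ord0 : 'I_(1 + l)) j = rshift 1 j by apply: val_inj.
have row'_0 : row' ord0 (col_mx x w) = w.
  by apply/matrixP => a b; rewrite mxE lift0E; exact: col_mxEd.
have xwf r : (col_mx x w *m f) r 0 = (r == ord0)%:R.
  rewrite mul_col_mx xf wf; case: (unliftP ord0 r) => [j ->|->].
    by rewrite lift0E col_mxEd mxE.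
  by rewrite eqxx (_ : @ord0 l = lshift l (@ord0 0)) ?col_mxEu ?mxE //; apply: val_inj.
have := contract_det_colsel_delta card_Q xwf; rewrite row'_0 expr0 mul1r => <-.
apply: eq_bigr => i _; congr (_ * _).
rewrite /coprod disjoints1; case: ifP => // iQ.
by rewrite muE card_setU1 // card_Q eqxx shsign_set1l.
Qed.

Lemma coprod_mu_contract_r n (v : 'M[k]_(n, m)) (x : 'rV[k]_m) P :
  x *m f = 1 -> v *m f = 0 ->
  \sum_i f i 0 * coprod (mu (col_mx v x)) P [set i] = mu v P.
Proof.
move=> xf vf; rewrite [RHS]muE -(mu_castmx (addn1 n)).
set A := castmx _ _.
have card_setU1 i : i \notin P -> #|P :|: [set i]| = (#|P|).+1.
  by move=> iP; rewrite setUC cardsU1 iP.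
case: eqP => card_P; last first.
  rewrite big1 // => i _; rewrite /coprod disjoint_sym disjoints1.
  case: ifP => iP; last by rewrite mulr0.
  by rewrite muE card_setU1 // eqSS; move/eqP/negbTE: card_P => ->; rewrite !mulr0.
have liftmaxE (j : 'I_n) : cast_ord (esym (addn1 n)) (lift ord_max j) = lshift 1 j.
  by apply: val_inj; exact: lift_max.
have row'_max : row' ord_max A = v.
  by apply/matrixP => a b; rewrite mxE castmxE /= liftmaxE cast_ord_id col_mxEu.
have Af r : (A *m f) r 0 = (r == ord_max)%:R.
  have -> : (A *m f) r 0 = col_mx (v *m f) (x *m f) (cast_ord (esym (addn1 n)) r) 0.
    by rewrite -mul_col_mx !mxE; apply: eq_bigr => i _; rewrite castmxE cast_ord_id.
  rewrite vf xf; case: (unliftP ord_max r) => [j ->|->].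
    by rewrite liftmaxE col_mxEu mxE eq_sym (negbTE (neq_lift _ _)).
  rewrite (_ : cast_ord _ _ = rshift n 0) ?col_mxEd ?mxE ?eqxx //.
  by apply: val_inj; rewrite /= addn0.
have := contract_det_colsel_delta card_P Af; rewrite row'_max /= => contractA.
(* The shuffle sign contributes [(-1)^n], matching the cofactor sign of the last row. *)
rewrite -[RHS]mul1r -[1](sqrr_sign _ n) expr2 -mulrA -contractA mulr_sumr.
apply: eq_bigr => i _; rewrite mulrCA; congr (_ * _).
rewrite /coprod disjoint_sym disjoints1; case: ifP => iP; last by rewrite mulr0.
by rewrite muE card_setU1 // card_P eqxx shsign_set1r // card_P -mulrA setUC.
Qed.

End CoproductContraction.

Lemma separating_functional (k : fieldType) m n (U : 'M[k]_(n, m)) (x : 'rV[k]_m) :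
  ~~ (x <= U)%MS -> exists f : 'cV[k]_m, x *m f = 1 /\ U *m f = 0.
Proof.
rewrite submxE => xC_neq0.
have [j xCj_neq0] : exists j, (x *m cokermx U) 0 j != 0.
  apply/existsP; apply: contraR xC_neq0; rewrite negb_exists => /forallP xC0.
  apply/eqP/matrixP => i j; rewrite ord1 [RHS]mxE; exact/eqP/negPn/xC0.
have xCj : x *m col j (cokermx U) = ((x *m cokermx U) 0 j)%:M.
  by rewrite colE mulmxA -colE [LHS]mx11_scalar mxE.
exists (((x *m cokermx U) 0 j)^-1 *: col j (cokermx U)); split.
  by rewrite -scalemxAr xCj scale_scalar_mx mulVf.
by rewrite -scalemxAr colE (mulmxA U) mulmx_coker mul0mx scaler0.
Qed.

Section FormExpansion.
Variables (k : fieldType) (m : nat) (B : {set 'I_m} -> {set 'I_m} -> k).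

Lemma cform_sum_basisr a b : cform B a b = \sum_Q b Q * cform B a (cbasis k Q).
Proof.
rewrite /cform exchange_big; apply: eq_bigr => T _.
rewrite mulr_sumr; apply: eq_bigr => S _.
rewrite (bigD1 T) //= big1 ?addr0 => [|T' /negbTE ne_T]; last by rewrite ffunE ne_T mulr0 mul0r.
by rewrite ffunE eqxx mulr1 mulrCA mulrA.
Qed.

Lemma cform_sum_basisl a b : cform B a b = \sum_P a P * cform B (cbasis k P) b.
Proof.
rewrite /cform; apply: eq_bigr => S _.
rewrite [in RHS](bigD1 S) //= [X in _ = _ * (_ + X)]big1 ?addr0 => [|S' /negbTE ne_S].
  by rewrite mulr_sumr; apply: eq_bigr => T _; rewrite ffunE eqxx mul1r !mulrA.
by apply: big1 => T _; rewrite ffunE ne_S !mul0r.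
Qed.

End FormExpansion.

Theorem proposition9p2 (k : fieldType) (m : nat) (d : nat)
  (B : {set 'I_m} -> {set 'I_m} -> k)
  (hchar : [pchar k] =i pred0) (hm : (0 < m)%N)
  (hdeg : form_degree B d) (hsym : form_symmetric B) (hcyc : form_cyclic B)
  (n l : nat) (v : 'M[k]_(n, m)) (w : 'M[k]_(l, m)) (x : 'rV[k]_m)
  (hv : row_free v) (hw : row_free w)
  (hx : ~~ (x <= col_mx v w)%MS) :
  cform B (mu (col_mx v x)) (mu w) = cform B (mu v) (mu (col_mx x w)).
Proof.
(* Only cyclicity and [x \notin span(v, w)] are used. *)
have [f [xf]] := separating_functional hx.
rewrite mul_col_mx => /eqP; rewrite col_mx_eq0 => /andP[/eqP vf /eqP wf].
rewrite cform_sum_basisr [RHS]cform_sum_basisl.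
under eq_bigr do rewrite -(coprod_mu_contract_l _ xf wf) mulr_suml.
under [RHS]eq_bigr do rewrite -(coprod_mu_contract_r _ xf vf) mulr_suml.
rewrite exchange_big [RHS]exchange_big; apply: eq_bigr => i _.
under eq_bigr do rewrite -mulrA.
under [RHS]eq_bigr do rewrite -mulrA.
by rewrite -!mulr_sumr hcyc.
Qed.
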